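(* Let $k\ge2$ and let $\mathcal{H}=(V,E)$ be a linear $k$-uniform hypergraph with $|V|=k^2$ and $|E|=k^2+1$, and let $e_0\in E$ be a hyperedge such that $\mathrm{deg}_{\mathcal{H}}(x)=k+1$ for all $x\in e_0$ and $\mathrm{deg}_{\mathcal{H}}(x)\ge k$ for all $x\in V\smallsetminus e_0$. Then (i) $\mathrm{deg}_{\mathcal{H}}(x)=k$ for all $x\in V\smallsetminus e_0$; (ii) $\mathrm{d}_{\mathcal{H}}(e)=k^2-k+1$ for all $e\in E\smallsetminus\{e_0\}$.
   Context: A hypergraph $\mathcal{H}=(V,E)$ has a finite vertex set $V$ and a finite set $E$ of nonempty subsets of $V$ (hyperedges). Linear: $|e\cap e'|\le1$ for distinct hyperedges; $k$-uniform: every hyperedge has $k$ elements. $\mathrm{deg}_{\mathcal{H}}(x)$ is the number of hyperedges containing $x$; $\mathrm{d}_{\mathcal{H}}(e)=|\{a\in E\smallsetminus\{e\}: a\cap e\ne\varnothing\}|$. *)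

From mathcomp Require Import all_boot.
Set Implicit Arguments. Unset Strict Implicit. Unset Printing Implicit Defensive.

(* A hypergraph on a finite vertex type V is a set E of hyperedges (finite
   subsets of V); V itself is the (finite) vertex set. *)

Definition hyperedges_nonempty (V : finType) (E : {set {set V}}) : Prop :=
  forall e, e \in E -> e != set0.

Definition linear_hg (V : finType) (E : {set {set V}}) : Prop :=
  forall e e', e \in E -> e' \in E -> e != e' -> #|e :&: e'| <= 1.

Definition uniform_hg (V : finType) (k : nat) (E : {set {set V}}) : Prop :=
  forall e, e \in E -> #|e| = k.

Definition hdeg (V : finType) (E : {set {set V}}) (x : V) : nat :=
  #|[set e in E | x \in e]|.

Definition edeg (V : finType) (E : {set {set V}}) (e : {set V}) : nat :=
  #|[set a in E | (a != e) && (a :&: e != set0)]|.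

(* Counting vertex-edge incidences gives sum_x deg x = k (k^2 + 1)
   = k (k + 1) + k (k^2 - k), so every lower bound deg x >= k off e0 is tight.
   In a linear hypergraph an edge e meets exactly sum_{x in e} (deg x - 1) other
   edges, which with the degrees now known is k (k - 1) + |e :&: e0|.  For e = e0
   this is k^2 = |E| - 1, so every other edge meets e0, in a single vertex by
   linearity, and then d(e) = k (k - 1) + 1. *)

From mathcomp Require Import all_boot zify.
Set Implicit Arguments. Unset Strict Implicit.

Lemma sum_nat_of_bool (T : finType) (B : {set T}) (P : pred T) :
  \sum_(y in B) P y = #|[set y in B | P y]|.
Proof.
by rewrite -sum1dep_card big_mkcondr; apply: eq_bigr => y _; case: (P y).
Qed.

Section Incidences.

Variable V : finType.

Lemma sum_card_setI_hdeg (E : {set {set V}}) (A : {set V}) :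
  \sum_(a in E) #|a :&: A| = \sum_(x in A) hdeg E x.
Proof.
have card_setI a : #|a :&: A| = \sum_(x in A) (x \in a).
  by rewrite sum_nat_of_bool; apply: eq_card => x; rewrite !inE andbC.
under eq_bigr do rewrite card_setI.
by rewrite exchange_big; apply: eq_bigr => x _; rewrite sum_nat_of_bool.
Qed.

Lemma sum_hdeg_uniform (E : {set {set V}}) k :
  uniform_hg k E -> \sum_(x in [set: V]) hdeg E x = #|E| * k.
Proof.
move=> unif; rewrite -sum_nat_const -(sum_card_setI_hdeg _ setT).
by apply: eq_bigr => a aE; rewrite setIT unif.
Qed.

Lemma hdeg_setD1 (E : {set {set V}}) e x :
  e \in E -> x \in e -> hdeg (E :\ e) x = (hdeg E x).-1.
Proof.
move=> eE xe; rewrite /hdeg.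
have -> : [set a in E | x \in a] = e |: [set a in E :\ e | x \in a].
  by apply/setP => a; rewrite !inE; case: eqVneq => [->|_]; rewrite ?eE ?xe.
by rewrite cardsU1 !inE eqxx.
Qed.

Lemma edeg_linear (E : {set {set V}}) e :
  linear_hg E -> e \in E -> edeg E e = \sum_(x in e) (hdeg E x).-1.
Proof.
move=> lin eE; rewrite -(eq_bigr _ (fun x => hdeg_setD1 eE)) -sum_card_setI_hdeg.
have -> : edeg E e = #|[set a in E :\ e | a :&: e != set0]|.
  by apply: eq_card => a; rewrite !inE andbA [(a != e) && _]andbC.
rewrite -sum_nat_of_bool; apply: eq_bigr => a; rewrite !inE => /andP[ae aE].
by have := lin a e aE eE ae; rewrite -cards_eq0; case: #|_| => [|[]].
Qed.

Lemma setI_neq0_of_edeg_max (E : {set {set V}}) e a :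
  e \in E -> edeg E e = #|E|.-1 -> a \in E -> a != e -> a :&: e != set0.
Proof.
move=> eE edeg_max aE ae.
have sub : [set b in E | (b != e) && (b :&: e != set0)] \subset E :\ e.
  by apply/subsetP => b; rewrite !inE => /and3P[-> ->].
have /subset_cardP/(_ sub) same :
    #|[set b in E | (b != e) && (b :&: e != set0)]| = #|E :\ e|.
  by rewrite -[LHS]/(edeg E e) edeg_max (cardsD1 e E) eE.
by have := same a; rewrite !inE ae aE /= => ->.
Qed.

End Incidences.

Section Proposition.

Variables (k : nat) (V : finType) (E : {set {set V}}) (e0 : {set V}).
Hypotheses (lin : linear_hg E) (unif : uniform_hg k E).
Hypotheses (cardV : #|V| = k ^ 2) (cardE : #|E| = k ^ 2 + 1) (e0E : e0 \in E).
Hypothesis hdeg_e0 : forall x, x \in e0 -> hdeg E x = k + 1.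
Hypothesis hdeg_ge : forall x, x \notin e0 -> k <= hdeg E x.

Lemma hdeg_notin_e0 x : x \notin e0 -> hdeg E x = k.
Proof.
move=> xe0.
have card_e0 : #|e0| = k by apply: unif.
have card_out : #|~: e0| = k ^ 2 - k by have := cardsC e0; lia.
have sum_out : \sum_(y in ~: e0) k = \sum_(y in ~: e0) hdeg E y.
  have := sum_hdeg_uniform unif.
  rewrite (big_setID e0) setTI setTD /= (eq_bigr _ hdeg_e0) !sum_nat_const.
  by rewrite card_e0 card_out cardE; nia.
have /leqif_sum[_] : forall y, y \in ~: e0 -> k <= hdeg E y ?= iff (k == hdeg E y).
  by move=> y; rewrite inE => /hdeg_ge/leqif_eq.
rewrite sum_out eqxx => /esym/forall_inP/(_ x).
by rewrite inE => /(_ xe0)/eqP.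
Qed.

Lemma edegE e : e \in E -> edeg E e = k * k.-1 + #|e :&: e0|.
Proof.
move=> eE; rewrite edeg_linear // (big_setID e0) /=.
rewrite (eq_bigr (fun=> k)); last by move=> x /setIP[_ /hdeg_e0 ->]; rewrite addn1.
rewrite [X in _ + X](eq_bigr (fun=> k.-1)); last by move=> x /setDP[_ /hdeg_notin_e0 ->].
rewrite !sum_nat_const -subn1 !mulnBr !muln1.
by have := cardsID e0 e; rewrite (unif eE); nia.
Qed.

Lemma card_setI_e0 e : e \in E -> e != e0 -> #|e :&: e0| = 1.
Proof.
move=> eE ee0.
have edeg_max : edeg E e0 = #|E|.-1.
  by rewrite edegE // setIid (unif e0E) cardE addn1 -subn1 mulnBr; nia.
have := setI_neq0_of_edeg_max e0E edeg_max eE ee0.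
by have := lin eE e0E ee0; rewrite -cards_eq0; lia.
Qed.

End Proposition.

Theorem proposition4p1 (k : nat) (V : finType) (E : {set {set V}}) (e0 : {set V}) :
  2 <= k ->
  hyperedges_nonempty E ->
  linear_hg E ->
  uniform_hg k E ->
  #|V| = k ^ 2 ->
  #|E| = k ^ 2 + 1 ->
  e0 \in E ->
  (forall x, x \in e0 -> hdeg E x = k + 1) ->
  (forall x, x \notin e0 -> k <= hdeg E x) ->
  (forall x, x \notin e0 -> hdeg E x = k) /\
  (forall e, e \in E -> e != e0 -> edeg E e = k ^ 2 - k + 1).
Proof.
move=> _ _ lin unif cardV cardE e0E hdeg_e0 hdeg_ge.
split=> [x|e eE ee0]; first exact: hdeg_notin_e0.
rewrite (@edegE k V E e0) // (@card_setI_e0 k V E e0) //.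
by rewrite -subn1 mulnBr; nia.
Qed.
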